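(* Let $\mathbf{B}$ be a binomial ring, $n\ge0$, and $X$ a finite set. In the category $\mathbb{Q}\otimes_{\mathbb Z}\mathfrak{Laby}^n$, $$I_X=\sum_{S}\frac{1}{\deg S}\,S,$$ where $S$ ranges over the pure mazes $X\to X$ consisting, for each $x\in X$, of $d_x\ge1$ passages $x\xrightarrow1x$, with $\sum_xd_x=n$, and $\deg S=\prod_xd_x!$.
   Context: Binomial ring: commutative unital, torsion-free, $\binom ak\in\mathbf{B}$ for $a\in\mathbf{B}$, $k\ge0$. A passage $p\colon x\to y$ carries label $\overline p\in\mathbf{B}$; a maze $P\colon X\to Y$ between finite sets is a finite multi-set of passages with every element of $X$ a source and of $Y$ a target; $I_X=\{x\xrightarrow1x:x\in X\}$. $\mathfrak{Laby}$: objects formal finite direct sums of finite sets; morphisms generated by mazes modulo $P\cup\{x\xrightarrow0y\}=0$ and $P\cup\{x\xrightarrow{a+b}y\}=P\cup\{x\xrightarrow ay\}+P\cup\{x\xrightarrow by\}+P\cup\{x\xrightarrow ay,x\xrightarrow by\}$; composition $P\circ Q=\sum_{U\sqsubseteq P\boxtimes Q}U$ ($U$ a sub-multi-set of composable pairs using every passage occurrence of $P$ and $Q$, read as maze with passages $x\xrightarrow{\overline p\overline q}z$). $\mathfrak{Laby}_n$: quotient by $P=0$ if $|P|>n$ and $P=\sum_d\prod_p\binom{\overline p}{d_p}I_d$ ($d_p\ge1$ on passage occurrences $p$; $I_d$ has $d_p$ label-$1$ passages from source to target of $p$). $a\boxdot P$: all labels multiplied by $a\in\mathbb{Q}\otimes\mathbf{B}$.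 $\mathfrak{Laby}^n$: image of $\mathfrak{Laby}_n$ in $\mathbb{Q}\otimes_{\mathbb Z}\mathfrak{Laby}_n$ modulo the ideal generated by all $a^nP-a\boxdot P$, $a\in\mathbb{Q}\otimes\mathbf{B}$. *)

From HB Require Import structures.
From mathcomp Require Import all_boot all_order all_algebra.
Set Implicit Arguments. Unset Strict Implicit. Unset Printing Implicit Defensive.
Import Order.TTheory GRing.Theory Num.Theory.
Local Open Scope ring_scope.

(* B : the binomial ring; K : a concrete model of Q (x)_Z B, given by an
   injective ring map iota : B -> K, a Q-algebra structure qs : rat -> K,
   and the fact that every element of K is iota b / (m+1). *)

Section Laby.
Variables (B K : comPzRingType) (iota : {rmorphism B -> K})
          (qs : {rmorphism rat -> K}) (n : nat).

Definition src {X Y : Type} (p : X * Y * B) : X := p.1.1.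
Definition tgt {X Y : Type} (p : X * Y * B) : Y := p.1.2.
Definition lab {X Y : Type} (p : X * Y * B) : B := p.2.

(* A maze X -> Y is a finite multiset of passages (a seq, considered up to
   permutation) in which every x is a source and every y is a target. *)
Definition is_maze {X Y : finType} (P : seq (X * Y * B)) : bool :=
  [forall x : X, has (fun p => src p == x) P] &&
  [forall y : Y, has (fun p => tgt p == y) P].

Definition comb (X Y : finType) := seq (K * seq (X * Y * B)).

Definition coef {X Y : finType} (r : comb X Y) (P : seq (X * Y * B)) : K :=
  \sum_(e <- r | perm_eq e.2 P) e.1.

Definition cscale {X Y : finType} (c : K) (r : comb X Y) : comb X Y :=
  [seq (c * e.1, e.2) | e <- r].

(* composition P o Q of mazes P : X -> Y, Q : Y -> Z (diagrammatic order):
   sum over sets U of composable pairs of passage occurrences using every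
   occurrence of P and of Q. *)
Section Comp.
Variables (X Y Z : finType) (P : seq (X * Y * B)) (Q : seq (Y * Z * B)).
Let tP := in_tuple P.
Let tQ := in_tuple Q.
Definition comp_valid (U : {set 'I_(size P) * 'I_(size Q)}) : bool :=
  [forall u in U, tgt (tnth tP u.1) == src (tnth tQ u.2)] &&
  [forall i, exists j, (i, j) \in U] && [forall j, exists i, (i, j) \in U].
Definition comp_maze (U : {set 'I_(size P) * 'I_(size Q)}) : seq (X * Z * B) :=
  [seq (src (tnth tP u.1), tgt (tnth tQ u.2), lab (tnth tP u.1) * lab (tnth tQ u.2))
  | u <- enum U].
Definition comp : comb X Z :=
  [seq (1, comp_maze U) | U <- enum {set 'I_(size P) * 'I_(size Q)} & comp_valid U].
End Comp.

Definition lcomp {X Y Z : finType} (P : seq (X * Y * B)) (r : comb Y Z) : comb X Z :=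
  flatten [seq cscale e.1 (comp P e.2) | e <- r].
Definition rcomp {X Y Z : finType} (r : comb X Y) (Q : seq (Y * Z * B)) : comb X Z :=
  flatten [seq cscale e.1 (comp e.2 Q) | e <- r].

Definition binomK (a : K) (k : nat) : K :=
  qs (k`!%:R)^-1 * \prod_(i < k) (a - i%:R).

(* Expansion  sum_d prod_p binom(f(label p), d_p) I_d, d_p >= 1; the terms
   with sum d_p > n vanish in Laby_n, so d_p <= n is enough. *)
Section Expand.
Variables (X Y : finType) (f : B -> K) (P : seq (X * Y * B)).
Let tP := in_tuple P.
Definition Id_maze (d : {ffun 'I_(size P) -> 'I_n.+1}) : seq (X * Y * B) :=
  flatten [seq nseq (d i) (src (tnth tP i), tgt (tnth tP i), 1) | i <- enum 'I_(size P)].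
Definition expand : comb X Y :=
  [seq (\prod_i binomK (f (lab (tnth tP i))) (d i), Id_maze d)
  | d : {ffun 'I_(size P) -> 'I_n.+1} <- enum {ffun 'I_(size P) -> 'I_n.+1} & [forall i, (0 < d i)%N]].
End Expand.

(* LI X Y r : r is zero in Hom_{Q (x) Laby^n}(X, Y), i.e. r lies in the
   (K-linear, composition-closed) ideal generated by all defining relations
   of Laby, Laby_n and Laby^n. *)
Inductive LI : forall X Y : finType, comb X Y -> Prop :=
| LI_ext (X Y : finType) (r s : comb X Y) :
    LI r -> (forall P, coef r P = coef s P) -> LI s
| LI_nil (X Y : finType) : @LI X Y [::]
| LI_add (X Y : finType) (r s : comb X Y) : LI r -> LI s -> LI (r ++ s)
| LI_scale (X Y : finType) (c : K) (r : comb X Y) : LI r -> LI (cscale c r)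
| LI_compl (X Y Z : finType) (P : seq (X * Y * B)) (r : comb Y Z) :
    is_maze P -> LI r -> LI (lcomp P r)
| LI_compr (X Y Z : finType) (r : comb X Y) (Q : seq (Y * Z * B)) :
    is_maze Q -> LI r -> LI (rcomp r Q)
| LI_zero (X Y : finType) (P : seq (X * Y * B)) x y :
    is_maze ((x, y, 0) :: P) -> LI [:: (1, (x, y, 0) :: P)]
| LI_addlab (X Y : finType) (P : seq (X * Y * B)) x y a b :
    is_maze ((x, y, a + b) :: P) ->
    LI [:: (1, (x, y, a + b) :: P); (-1, (x, y, a) :: P);
           (-1, (x, y, b) :: P); (-1, (x, y, a) :: (x, y, b) :: P)]
| LI_big (X Y : finType) (P : seq (X * Y * B)) :
    is_maze P -> (n < size P)%N -> LI [:: (1, P)]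
| LI_binom (X Y : finType) (P : seq (X * Y * B)) :
    is_maze P -> LI ((1, P) :: cscale (-1) (expand iota P))
| LI_hom (X Y : finType) (P : seq (X * Y * B)) (a : K) :
    is_maze P -> LI ((a ^+ n, P) :: cscale (-1) (expand (fun b => a * iota b) P)).

Definition Leq {X Y : finType} (r s : comb X Y) : Prop := LI (r ++ cscale (-1) s).

End Laby.

Definition idmaze (B : comPzRingType) (X : finType) : seq (X * X * B) :=
  [seq (x, x, 1) | x <- enum X].
Definition pure_degs (X : finType) (n : nat) : seq {ffun X -> 'I_n.+1} :=
  [seq d : {ffun X -> 'I_n.+1} <- enum {ffun X -> 'I_n.+1} |
    [forall x, (0 < d x)%N] && ((\sum_x (d x : nat))%N == n)].
Definition pure_maze (B : comPzRingType) (X : finType) (n : nat)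
  (d : {ffun X -> 'I_n.+1}) : seq (X * X * B) :=
  flatten [seq nseq (d x) (x, x, 1) | x <- enum X].
Definition pure_deg (X : finType) (n : nat) (d : {ffun X -> 'I_n.+1}) : nat :=
  (\prod_x (d x)`!)%N.

(* The relation [a^n P = a (.) P] with a = j = 0, ..., n applied to the identity
   maze gives [j^n I_X = sum_d prod_x binom(j, d_x) I_d].  Combining these n+1
   identities with the weights (-1)^(n-j) C(n,j) / n!, which extract the
   coefficient of X^n from any rational polynomial of degree at most n, turns
   the left side into I_X and the coefficient of I_d into the X^n-coefficient
   of prod_x binom(X, d_x).  That coefficient is prod_x 1/d_x! when
   sum_x d_x = n and vanishes when the sum is smaller; mazes with more than n
   passages are zero in Laby_n. *)

From mathcomp Require Import all_boot all_order all_algebra.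
From mathcomp Require Import ring.
Set Implicit Arguments. Unset Strict Implicit. Unset Printing Implicit Defensive.
Import Order.TTheory GRing.Theory Num.Theory.
Local Open Scope ring_scope.

Lemma enum_index_enum (T : finType) : enum T = index_enum T.
Proof. by rewrite /index_enum unlock enumT. Qed.

Section FiniteDifferences.

Definition alt_bin_sum (n : nat) (f : nat -> rat) : rat :=
  \sum_(0 <= j < n.+1) (-1) ^+ j * 'C(n, j)%:R * f j.

Lemma alt_bin_sumS n f :
  alt_bin_sum n.+1 f = alt_bin_sum n f - alt_bin_sum n (fun j => f j.+1).
Proof.
rewrite /alt_bin_sum big_nat_recl // [in X in _ = X - _]big_nat_recl //.
have -> : \sum_(0 <= i < n.+1) (-1) ^+ i.+1 * 'C(n.+1, i.+1)%:R * f i.+1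
   = \sum_(0 <= i < n.+1) (-1) ^+ i.+1 * 'C(n, i.+1)%:R * f i.+1
     - \sum_(0 <= i < n.+1) (-1) ^+ i * 'C(n, i)%:R * f i.+1.
  by rewrite -sumrB; apply: eq_bigr => i _; rewrite binS natrD exprS; ring.
rewrite [in X in _ + (X - _) = _]big_nat_recr //= (@bin_small n n.+1) //.
rewrite mulr0 mul0r addr0.
by rewrite !bin0 addrA.
Qed.

Lemma alt_bin_sumD n f g :
  alt_bin_sum n (fun j => f j + g j) = alt_bin_sum n f + alt_bin_sum n g.
Proof. by rewrite /alt_bin_sum -big_split; apply: eq_bigr => i _; rewrite mulrDr. Qed.

Lemma eq_alt_bin_sum n f g : f =1 g -> alt_bin_sum n f = alt_bin_sum n g.
Proof. by move=> fg; apply: eq_bigr => i _; rewrite fg. Qed.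

Lemma alt_bin_sum_bin n k :
  alt_bin_sum n (fun j => 'C(j, k)%:R) = (-1) ^+ n * (n == k)%:R.
Proof.
elim: n k => [|n IH] [|k].
- by rewrite /alt_bin_sum big_nat1.
- by rewrite /alt_bin_sum big_nat1 bin0n.
- rewrite alt_bin_sumS (@eq_alt_bin_sum n (fun j => 'C(j.+1, 0)%:R)
    (fun j => 'C(j, 0)%:R)) ?subrr ?mulr0 // => j; by rewrite !bin0.
rewrite alt_bin_sumS (@eq_alt_bin_sum n (fun j => 'C(j.+1, k.+1)%:R)
   (fun j => 'C(j, k.+1)%:R + 'C(j, k)%:R)); last by move=> j; rewrite binS natrD.
by rewrite alt_bin_sumD !IH eqSS exprS; ring.
Qed.

Definition ffact_poly (k : nat) : {poly rat} := \prod_(i < k) ('X - i%:R%:P).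

Definition binom_poly (k : nat) : {poly rat} := (k`!%:R)^-1 *: ffact_poly k.

Lemma fact_neq0 k : (k`!%:R : rat) != 0.
Proof. by rewrite pnatr_eq0 -lt0n fact_gt0. Qed.

Lemma size_ffact_poly k : size (ffact_poly k) = k.+1.
Proof.
by rewrite size_prod_XsubC /index_enum unlock -enumT -cardT card_ord.
Qed.

Lemma ffact_poly_monic k : ffact_poly k \is monic.
Proof. exact: monic_prod_XsubC. Qed.

Lemma horner_ffact_poly k j : (ffact_poly k).[j%:R] = (j ^_ k)%:R.
Proof.
rewrite horner_prod; elim: k => [|k IH]; first by rewrite big_ord0 ffactn0.
rewrite big_ord_recr /= IH hornerXsubC ffactnSr natrM.
have [le_kj|lt_jk] := leqP k j; first by rewrite natrB.
by rewrite ffact_small // mulr0n !mul0r.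
Qed.

Lemma size_binom_poly k : size (binom_poly k) = k.+1.
Proof. by rewrite size_scale ?size_ffact_poly // invr_eq0 fact_neq0. Qed.

Lemma lead_coef_binom_poly k : lead_coef (binom_poly k) = (k`!%:R)^-1.
Proof. by rewrite lead_coefZ (monicP (ffact_poly_monic k)) mulr1. Qed.

Lemma horner_binom_poly k j : (binom_poly k).[j%:R] = 'C(j, k)%:R.
Proof.
rewrite hornerZ horner_ffact_poly -bin_ffact natrM mulrC mulrK //.
by rewrite unitfE fact_neq0.
Qed.

Lemma binom_poly_basis m (p : {poly rat}) : (size p <= m.+1)%N ->
  exists c : nat -> rat, c m = m`!%:R * p`_m /\
    forall j : nat, p.[j%:R] = \sum_(0 <= k < m.+1) c k * 'C(j, k)%:R.
Proof.
elim: m p => [|m IH] p sp.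
  exists (fun _ => p`_0); split; first by rewrite mul1r.
  by move=> j; rewrite big_nat1 bin0 mulr1 {1}(size1_polyC sp) hornerC.
pose a := (m.+1)`!%:R * p`_m.+1.
pose q := p - a *: binom_poly m.+1.
have size_q : (size q <= m.+1)%N.
  apply/leq_sizeP => i; rewrite leq_eqVlt => /orP[/eqP <-|lt_mi].
    have top_coef : (binom_poly m.+1)`_m.+1 = ((m.+1)`!%:R)^-1.
      by rewrite -lead_coef_binom_poly lead_coefE size_binom_poly.
    by rewrite /q coefB coefZ top_coef /a mulrAC mulfV ?fact_neq0 // mul1r subrr.
  apply: nth_default; rewrite (leq_trans (size_polyD _ _)) // geq_max size_polyN.
  rewrite (leq_trans sp) //= (leq_trans (size_scale_leq _ _)) //.
  by rewrite size_binom_poly.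
have [c [cm ce]] := IH q size_q.
exists (fun k => if k == m.+1 then a else c k); split; first by rewrite eqxx.
move=> j; rewrite big_nat_recr //= eqxx.
have -> : p.[j%:R] = q.[j%:R] + a * (binom_poly m.+1).[j%:R].
  by rewrite /q hornerD hornerN hornerZ subrK.
rewrite horner_binom_poly ce; congr (_ + _).
by apply: eq_big_nat => k /andP[_ lt_km]; rewrite ltn_eqF.
Qed.

Definition diff_weight (n j : nat) : rat :=
  (-1) ^+ n * (-1) ^+ j * 'C(n, j)%:R / n`!%:R.

Lemma sum_diff_weight_horner n (p : {poly rat}) : (size p <= n.+1)%N ->
  \sum_(0 <= j < n.+1) diff_weight n j * p.[j%:R] = p`_n.
Proof.
move=> sp; have [c [cn ce]] := binom_poly_basis sp.
under eq_bigr => j _ do rewrite ce mulr_sumr.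
rewrite exchange_big /=.
have E k : \sum_(0 <= i < n.+1) diff_weight n i * (c k * 'C(i, k)%:R)
   = c k * ((-1) ^+ n / n`!%:R * alt_bin_sum n (fun j => 'C(j, k)%:R)).
  rewrite /alt_bin_sum !mulr_sumr; apply: eq_bigr => i _.
  by rewrite /diff_weight; ring.
under eq_bigr => k _ do rewrite E alt_bin_sum_bin.
rewrite big_nat_recr //= big1_seq ?add0r; last first.
  move=> k; rewrite mem_index_iota => /andP[_ lt_kn].
  by rewrite eq_sym ltn_eqF // !mulr0.
have sign_sq : (-1) ^+ n * (-1) ^+ n = 1 :> rat.
  by rewrite -exprMn mulrNN mulr1 expr1n.
rewrite eqxx mulr1 cn [_ / _ * _]mulrAC sign_sq mul1r.
by rewrite mulrAC mulfV ?fact_neq0 // mul1r.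
Qed.

Lemma size_lead_coef_prod_binom_poly (I : Type) (s : seq I) (F : I -> nat) :
  size (\prod_(i <- s) binom_poly (F i)) = (\sum_(i <- s) F i)%N.+1 /\
  lead_coef (\prod_(i <- s) binom_poly (F i)) = \prod_(i <- s) ((F i)`!%:R)^-1.
Proof.
elim: s => [|x s [IHs IHl]]; first by rewrite !big_nil size_poly1 lead_coef1.
have nz_x : binom_poly (F x) != 0 by rewrite -size_poly_eq0 size_binom_poly.
have nz_s : \prod_(i <- s) binom_poly (F i) != 0 by rewrite -size_poly_eq0 IHs.
rewrite !big_cons size_mul // lead_coefM IHs IHl size_binom_poly.
by rewrite lead_coef_binom_poly addSn addnS.
Qed.

Lemma coef_prod_binom_poly (I : Type) (s : seq I) (F : I -> nat) n :
  (\sum_(i <- s) F i <= n)%N ->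
  (\prod_(i <- s) binom_poly (F i))`_n =
  if (\sum_(i <- s) F i == n)%N then \prod_(i <- s) ((F i)`!%:R)^-1 else 0.
Proof.
have [sz ld] := size_lead_coef_prod_binom_poly s F.
move=> le_sn; case: eqP => [<-|ne_sn]; first by rewrite -ld lead_coefE sz.
by rewrite nth_default // sz ltn_neqAle le_sn andbT; apply/eqP.
Qed.

End FiniteDifferences.

Lemma binomK_rat (K : comPzRingType) (qs : {rmorphism rat -> K}) (x : rat) k :
  binomK qs (qs x) k = qs (binom_poly k).[x].
Proof.
rewrite /binomK hornerZ horner_prod rmorphM rmorph_prod; congr (_ * _).
by apply: eq_bigr => i _; rewrite hornerXsubC rmorphB rmorph_nat.
Qed.

Section Combinations.
Variables (B K : comPzRingType) (iota : {rmorphism B -> K})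
          (qs : {rmorphism rat -> K}) (n : nat) (X Y : finType).
Implicit Types (r s : comb B K X Y) (P : seq (X * Y * B)).

Lemma coef_cat r s P : coef (r ++ s) P = coef r P + coef s P.
Proof. by rewrite /coef big_cat. Qed.

Lemma coef_cscale c r P : coef (cscale c r) P = c * coef r P.
Proof. by rewrite /coef /cscale big_map mulr_sumr. Qed.

Lemma coef_cons e r P :
  coef (e :: r) P = (if perm_eq e.2 P then e.1 else 0) + coef r P.
Proof. by rewrite /coef big_cons; case: ifP; rewrite ?add0r. Qed.

Lemma coef_nil P : coef ([::] : comb B K X Y) P = 0.
Proof. by rewrite /coef big_nil. Qed.

Lemma coef_flatten (L : seq (comb B K X Y)) P :
  coef (flatten L) P = \sum_(r <- L) coef r P.
Proof.
elim: L => [|r L IH]; first by rewrite big_nil coef_nil.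
by rewrite /= coef_cat IH big_cons.
Qed.

Lemma coef_map (T : Type) (s : seq T) (f : T -> K) (g : T -> seq (X * Y * B)) P :
  coef [seq (f x, g x) | x <- s] P = \sum_(x <- s | perm_eq (g x) P) f x.
Proof. by rewrite /coef big_map. Qed.

Lemma coef_expand (f : B -> K) (Q : seq (X * Y * B)) P :
  coef (expand qs n f Q) P =
  \sum_(d <- enum {ffun 'I_(size Q) -> 'I_n.+1}
        | [forall i, (0 < d i)%N] && perm_eq (Id_maze d) P)
     \prod_i binomK qs (f (lab (tnth (in_tuple Q) i))) (d i).
Proof. by rewrite /expand coef_map big_filter_cond. Qed.

Lemma LI_flatten_map (T : Type) (s : seq T) (F : T -> comb B K X Y) :
  (forall x, LI iota qs n (F x)) -> LI iota qs n (flatten (map F s)).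
Proof. by move=> LF; elim: s => [|x s IH] /=; [exact: LI_nil | exact: LI_add]. Qed.

Lemma LI_long r :
  (forall e, e \in r -> is_maze e.2 && (n < size e.2)%N) -> LI iota qs n r.
Proof.
elim: r => [|e r IH] long_r; first exact: LI_nil.
rewrite -cat1s; apply: LI_add; last first.
  by apply: IH => e' e'r; apply: long_r; rewrite inE e'r orbT.
have /andP[maze_e long_e] := long_r e (mem_head _ _).
have := LI_scale e.1 (LI_big iota qs maze_e long_e).
by rewrite /cscale /= mulr1; case: e {long_r maze_e long_e}.
Qed.

End Combinations.

Section IdentityMaze.
Variables (B : comPzRingType) (X : finType) (n : nat).
Local Notation I := (idmaze B X).

Definition idmaze_src (i : 'I_(size I)) : X := src (tnth (in_tuple I) i).

Lemma tnth_idmaze i : tnth (in_tuple I) i = (idmaze_src i, idmaze_src i, 1).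
Proof.
by rewrite /idmaze_src; case/mapP: (mem_tnth i (in_tuple I)) => x _ ->.
Qed.

Lemma size_idmaze : size I = size (enum X).
Proof. exact: size_map. Qed.

Lemma idmaze_srcE (x0 : X) i : idmaze_src i = nth x0 (enum X) i.
Proof. by rewrite /idmaze_src (tnth_nth (x0, x0, 1)) (nth_map x0) // -size_idmaze. Qed.

Lemma idmaze_index_subproof (x : X) : (index x (enum X) < size I)%N.
Proof. by rewrite size_idmaze index_mem mem_enum. Qed.

Definition idmaze_index (x : X) : 'I_(size I) := Ordinal (idmaze_index_subproof x).

Lemma idmaze_indexK : cancel idmaze_index idmaze_src.
Proof. by move=> x; rewrite (idmaze_srcE x) nth_index // mem_enum. Qed.

Lemma idmaze_srcK : cancel idmaze_src idmaze_index.
Proof.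
move=> i; apply: val_inj => /=.
by rewrite (idmaze_srcE (idmaze_src i)) index_uniq ?enum_uniq // -size_idmaze.
Qed.

Lemma idmaze_src_bij : bijective idmaze_src.
Proof. exact: Bijective idmaze_srcK idmaze_indexK. Qed.

Lemma map_idmaze_src : [seq idmaze_src i | i <- enum 'I_(size I)] = enum X.
Proof.
have := congr1 (map (@src B X X)) (map_tnth_enum (in_tuple I)).
by rewrite -map_comp /= => ->; rewrite -map_comp map_id.
Qed.

Lemma idmaze_maze : is_maze I.
Proof.
by apply/andP; split; apply/forallP => x; apply/hasP; exists (x, x, 1);
  rewrite //; apply: map_f; rewrite mem_enum.
Qed.

Lemma Id_maze_idmaze (d : {ffun 'I_(size I) -> 'I_n.+1}) :
  Id_maze d = flatten [seq nseq (d i) (idmaze_src i, idmaze_src i, 1)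
                      | i <- enum 'I_(size I)].
Proof. by congr flatten; apply: eq_map => i; rewrite tnth_idmaze. Qed.

Lemma size_Id_maze_idmaze (d : {ffun 'I_(size I) -> 'I_n.+1}) :
  size (Id_maze d) = (\sum_i (d i : nat))%N.
Proof.
rewrite Id_maze_idmaze size_flatten sumnE /shape -map_comp big_map enum_index_enum.
by apply: eq_bigr => i _; rewrite /= size_nseq.
Qed.

Lemma Id_maze_idmaze_maze (d : {ffun 'I_(size I) -> 'I_n.+1}) :
  [forall i, (0 < d i)%N] -> is_maze (Id_maze d).
Proof.
move=> /forallP d_gt0.
have loop_in x : (x, x, 1) \in Id_maze d.
  rewrite Id_maze_idmaze; apply/flatten_mapP; exists (idmaze_index x).
    by rewrite mem_enum.
  by rewrite mem_nseq d_gt0 idmaze_indexK eqxx.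
by apply/andP; split; apply/forallP => x; apply/hasP; exists (x, x, 1).
Qed.

Definition deg_of_idmaze (d : {ffun X -> 'I_n.+1}) : {ffun 'I_(size I) -> 'I_n.+1} :=
  [ffun i => d (idmaze_src i)].

Lemma deg_of_idmaze_bij : bijective deg_of_idmaze.
Proof.
exists (fun d : {ffun 'I_(size I) -> 'I_n.+1} => [ffun x => d (idmaze_index x)]);
  by move=> d; apply/ffunP => z; rewrite !ffunE ?idmaze_indexK ?idmaze_srcK.
Qed.

Lemma Id_maze_deg_of_idmaze d : Id_maze (deg_of_idmaze d) = pure_maze B d.
Proof.
rewrite Id_maze_idmaze /pure_maze -map_idmaze_src -[X in _ = flatten X]map_comp; congr flatten.
by apply: eq_map => i; rewrite /= ffunE.
Qed.

Lemma reindex_idmaze (R : Type) (idx : R) (op : Monoid.com_law idx) (F : X -> R) :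
  \big[op/idx]_x F x = \big[op/idx]_i F (idmaze_src i).
Proof. exact: reindex (onW_bij _ idmaze_src_bij). Qed.

End IdentityMaze.

Section Identity.
Variables (B K : comPzRingType) (iota : {rmorphism B -> K})
          (qs : {rmorphism rat -> K}) (n : nat) (X : finType).
Local Notation I := (idmaze B X).
Local Notation deg := {ffun 'I_(size I) -> 'I_n.+1}.
Local Notation LI := (LI iota qs n).
Implicit Types (d : deg) (P : seq (X * X * B)).

Definition deg_pos d := [forall i, (0 < d i)%N].
Definition deg_total d := (\sum_i (d i : nat))%N.

Definition hom_relation (j : nat) : comb B K X X :=
  ((j%:R) ^+ n, I) :: cscale (-1) (expand qs n (fun b => j%:R * iota b) I).

Definition diff_hom_relations : comb B K X X :=
  flatten [seq cscale (qs (diff_weight n j)) (hom_relation j) | j <- index_iota 0 n.+1].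

(* What the weighted relations assign to I_d; it is the X^n-coefficient of
   prod_i binom(X, d_i) only when that product has degree at most n. *)
Definition diff_coef d : K :=
  qs (\sum_(0 <= j < n.+1) diff_weight n j * (\prod_i binom_poly (d i)).[j%:R]).

Definition long_terms : comb B K X X :=
  [seq (diff_coef d, Id_maze d)
  | d <- enum {: deg} & deg_pos d && (n < deg_total d)%N].

Lemma LI_diff_hom_relations : LI diff_hom_relations.
Proof.
apply: LI_flatten_map => j; apply: LI_scale.
exact: (LI_hom _ _ _ _ (idmaze_maze B X)).
Qed.

Lemma LI_long_terms : LI long_terms.
Proof.
apply: LI_long => e /mapP[d]; rewrite mem_filter => /andP[/andP[d_pos d_long] _] ->.
by rewrite /= Id_maze_idmaze_maze // size_Id_maze_idmaze.
Qed.

Lemma coef_long_terms P :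
  coef long_terms P =
  \sum_(d <- enum {: deg} | (deg_pos d && perm_eq (Id_maze d) P) && (n < deg_total d)%N)
     diff_coef d.
Proof.
rewrite /long_terms coef_map big_filter_cond.
by apply: eq_bigl => d; rewrite andbAC.
Qed.

Lemma coef_hom_relation j P :
  coef (hom_relation j) P = (if perm_eq I P then (j%:R) ^+ n else 0) -
    \sum_(d <- enum {: deg} | deg_pos d && perm_eq (Id_maze d) P)
       qs (\prod_i binom_poly (d i)).[j%:R].
Proof.
rewrite coef_cons coef_cscale coef_expand mulN1r; congr (_ - _).
apply: eq_bigr => d _; rewrite horner_prod rmorph_prod; apply: eq_bigr => i _.
by rewrite tnth_idmaze /lab /= rmorph1 mulr1 -(rmorph_nat qs j) binomK_rat.
Qed.

Lemma sum_diff_weight_Xn :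
  \sum_(0 <= j < n.+1) qs (diff_weight n j) * (j%:R) ^+ n = 1 :> K.
Proof.
transitivity (qs (\sum_(0 <= j < n.+1) diff_weight n j * ('X^n : {poly rat}).[j%:R])).
  rewrite rmorph_sum; apply: eq_bigr => j _.
  by rewrite hornerXn [RHS]rmorphM rmorphXn rmorph_nat.
by rewrite sum_diff_weight_horner ?size_polyXn // coefXn eqxx rmorph1.
Qed.

Lemma coef_diff_hom_relations P :
  coef diff_hom_relations P = (if perm_eq I P then 1 else 0) -
    \sum_(d <- enum {: deg} | deg_pos d && perm_eq (Id_maze d) P) diff_coef d.
Proof.
rewrite coef_flatten big_map.
under eq_bigr => j _ do rewrite coef_cscale coef_hom_relation mulrBr mulr_sumr.
rewrite sumrB exchange_big; congr (_ - _).
  by case: ifP => _; rewrite ?sum_diff_weight_Xn // big1 // => j _; rewrite mulr0.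
apply: eq_bigr => d _; rewrite /diff_coef rmorph_sum.
by apply: eq_bigr => j _; rewrite [RHS]rmorphM.
Qed.

Lemma diff_coef_short d : (deg_total d <= n)%N ->
  diff_coef d = if deg_total d == n then qs (\prod_i ((d i)`!%:R)^-1) else 0.
Proof.
move=> d_short; rewrite /diff_coef sum_diff_weight_horner; last first.
  by have [-> _] := size_lead_coef_prod_binom_poly (index_enum 'I_(size I)) (fun i => nat_of_ord (d i)).
by rewrite coef_prod_binom_poly //; case: ifP; rewrite ?rmorph0.
Qed.

Lemma sum_diff_coef_short P :
  \sum_(d <- enum {: deg} | (deg_pos d && perm_eq (Id_maze d) P) && ~~ (n < deg_total d)%N)
     diff_coef d =
  \sum_(d <- pure_degs X n | perm_eq (pure_maze B d) P) qs (pure_deg d)%:R^-1.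
Proof.
under eq_bigr => d /andP[_] do rewrite -leqNgt => /diff_coef_short ->.
rewrite -big_mkcondr /pure_degs [RHS]big_filter_cond !enum_index_enum.
rewrite (reindex _ (onW_bij _ (deg_of_idmaze_bij B X n))).
apply: eq_big => d.
  have -> : deg_total (deg_of_idmaze B d) = (\sum_x (d x : nat))%N.
    by rewrite [RHS](reindex_idmaze B); apply: eq_bigr => i _; rewrite ffunE.
  have -> : deg_pos (deg_of_idmaze B d) = [forall x, (0 < d x)%N].
    apply/forallP/forallP => d_gt0 x; last by rewrite ffunE.
    by have := d_gt0 (idmaze_index B x); rewrite ffunE idmaze_indexK.
  rewrite Id_maze_deg_of_idmaze.
  by case: eqP => [->|_]; rewrite ?ltnn ?eqxx /= ?andbF ?andbT.
move=> _; rewrite /pure_deg natr_prod -prodfV; congr (qs _).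
by rewrite [RHS](reindex_idmaze B); apply: eq_bigr => i _; rewrite ffunE.
Qed.

End Identity.

Theorem mainTheorem18
  (B K : comPzRingType) (iota : {rmorphism B -> K}) (qs : {rmorphism rat -> K})
  (B_torsionfree : forall (a : B) (m : nat), a *+ m.+1 = 0 -> a = 0)
  (B_binomial : forall (a : B) (k : nat),
      exists b : B, b *+ k`! = \prod_(i < k) (a - i%:R))
  (iota_inj : injective iota)
  (K_loc : forall k : K, exists (b : B) (m : nat), k * m.+1%:R = iota b)
  (n : nat) (X : finType) :
  Leq iota qs n [:: (1, idmaze B X)]
    [seq (qs ((pure_deg d)%:R)^-1, pure_maze B d) | d <- pure_degs X n].
Proof.
apply: (LI_ext (LI_add (LI_diff_hom_relations iota qs n X)
                       (LI_long_terms iota qs n X))) => P.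
rewrite coef_cat coef_diff_hom_relations coef_long_terms coef_cat.
rewrite (bigID (fun d => (n < deg_total d)%N)) /= sum_diff_coef_short.
rewrite coef_cons coef_nil coef_cscale coef_map addr0 mulN1r /=.
by rewrite opprD addrA addrAC subrK.
Qed.
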